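(* Let $\mathcal{X}\subseteq\mathbb{R}^n$, $\mathcal{Z}=\mathcal{X}\times\mathcal{Y}$, $\rho$ a probability distribution on $\mathcal{Z}$, $\mathcal{W}\subseteq\mathbb{R}^p$ compact, and let $\|\cdot\|_{\mathrm{adv}}$ be a norm on $\mathbb{R}^n$ with dual norm $\|\cdot\|_{\mathrm{adv}*}$, and $d(x,x')=\|x-x'\|_{\mathrm{adv}}$. Let $\ell:\mathcal{Z}\times\mathcal{W}\to\mathbb{R}^+$ be differentiable in $x$ and satisfy $\ell((x',y),w)-\ell((x,y),w)\ge\langle\nabla_x\ell((x,y),w),x'-x\rangle$ for all $x,x',y,w$. Define $R^*_\epsilon=\inf_{w\in\mathcal{W}}\mathbb{E}_{(x,y)\sim\rho}\big[\sup_{x':\|x-x'\|_{\mathrm{adv}}\le\epsilon}\ell((x',y),w)\big]$. Then $$R^*_\epsilon\ge R^*_0+\epsilon\inf_{w\in\mathcal{W}}\mathbb{E}_{(x,y)\sim\rho}\big[\|\nabla_x\ell((x,y),w)\|_{\mathrm{adv}*}\big].$$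
   Context: $R^*_0=\inf_{w}\mathbb{E}_{z\sim\rho}\ell(z,w)$ is the optimal standard risk; the dual norm is $\|v\|_{\mathrm{adv}*}=\sup_{\|u\|_{\mathrm{adv}}\le1}\langle v,u\rangle$. *)

From HB Require Import structures.
From mathcomp Require Import all_boot all_order all_algebra.
From mathcomp Require Import all_classical all_reals all_analysis measurable_realfun.
Set Implicit Arguments. Unset Strict Implicit. Unset Printing Implicit Defensive.
Import Order.TTheory GRing.Theory Num.Theory.
Import numFieldNormedType.Exports.
Local Open Scope classical_set_scope.
Local Open Scope ring_scope.

Definition dotv (R : realType) (n : nat) (u v : 'rV[R]_n) : R :=
  \sum_(i < n) u 0 i * v 0 i.

Definition is_norm (R : realType) (n : nat) (N : 'rV[R]_n -> R) : Prop :=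
  [/\ forall x, 0 <= N x,
      forall x, N x = 0 -> x = 0,
      forall (a : R) x, N (a *: x) = `|a| * N x
    & forall x y, N (x + y) <= N x + N y].

Definition dual_norm (R : realType) (n : nat) (N : 'rV[R]_n -> R) (v : 'rV[R]_n) : R :=
  sup [set dotv v u | u in [set u | N u <= 1]].

Definition grad (R : realType) (n : nat) (f : 'rV[R]_n -> R) (x : 'rV[R]_n) : 'rV[R]_n :=
  \row_(i < n) ('d f x) (delta_mx 0 i).

Local Open Scope ereal_scope.

(* Adversarial risk R*_eps, data z ~ P with (x, y) = (px z, py z). *)
Definition adv_risk (R : realType) (n p : nat) (d : measure_display)
  (Z : measurableType d) (Y : Type) (P : probability Z R)
  (px : Z -> 'rV[R]_n) (py : Z -> Y) (N : 'rV[R]_n -> R)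
  (loss : 'rV[R]_n -> Y -> 'rV[R]_p -> R) (W : set 'rV[R]_p) (eps : R) : \bar R :=
  ereal_inf [set (\int[P]_z
       ereal_sup [set (loss x' (py z) w)%:E | x' in [set x' | (N (px z - x') <= eps)%R]])
     | w in W].

Definition std_risk (R : realType) (n p : nat) (d : measure_display)
  (Z : measurableType d) (Y : Type) (P : probability Z R)
  (px : Z -> 'rV[R]_n) (py : Z -> Y)
  (loss : 'rV[R]_n -> Y -> 'rV[R]_p -> R) (W : set 'rV[R]_p) : \bar R :=
  ereal_inf [set (\int[P]_z (loss (px z) (py z) w)%:E) | w in W].

Definition grad_term (R : realType) (n p : nat) (d : measure_display)
  (Z : measurableType d) (Y : Type) (P : probability Z R)
  (px : Z -> 'rV[R]_n) (py : Z -> Y) (N : 'rV[R]_n -> R)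
  (loss : 'rV[R]_n -> Y -> 'rV[R]_p -> R) (W : set 'rV[R]_p) : \bar R :=
  ereal_inf [set (\int[P]_z
       (dual_norm N (grad (fun x => loss x (py z) w) (px z)))%:E) | w in W].

(* Fix w.  At every data point x the subgradient inequality gives, for each
   direction u with ||u|| <= 1,  loss (x + eps u) >= loss x + eps <grad, u>;
   taking the supremum over u, the worst case over the eps-ball dominates
   loss x + eps ||grad||_*.  Integrating this pointwise bound (monotonicity of
   the integral of nonnegative functions needs no measurability of the larger
   function) and bounding both resulting expectations below by their infima
   over W gives the claim for every w, hence for the infimum. *)
From HB Require Import structures.
From mathcomp Require Import all_boot all_order all_algebra.
From mathcomp Require Import all_classical all_reals all_analysis measurable_realfun.
From mathcomp Require Import lra.
Import Order.TTheory GRing.Theory Num.Theory.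
Import numFieldNormedType.Exports.
Local Open Scope classical_set_scope.
Local Open Scope ring_scope.

Lemma dotvZ (R : realType) (n : nat) (v u : 'rV[R]_n) (a : R) :
  dotv v (a *: u) = a * dotv v u.
Proof.
by rewrite /dotv mulr_sumr; apply: eq_bigr => i _; rewrite mxE mulrCA.
Qed.

Lemma dotv0 (R : realType) (n : nat) (v : 'rV[R]_n) : dotv v 0 = 0.
Proof. by rewrite -(scale0r (0 : 'rV[R]_n)) dotvZ mul0r. Qed.

Lemma is_norm0 (R : realType) (n : nat) (N : 'rV[R]_n -> R) :
  is_norm N -> N 0 = 0.
Proof. by case=> _ _ NZ _; rewrite -(scale0r (0 : 'rV[R]_n)) NZ normr0 mul0r. Qed.

Lemma dual_norm_ge0 (R : realType) (n : nat) (N : 'rV[R]_n -> R) (v : 'rV[R]_n) :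
  is_norm N -> 0 <= dual_norm N v.
Proof.
move=> normN; rewrite /dual_norm.
have [supS|nosupS] := pselect (has_sup [set dotv v u | u in [set u | N u <= 1]]).
  by apply: sup_upper_bound => //; exists 0; rewrite ?dotv0 //= is_norm0.
by rewrite sup_out.
Qed.

Lemma dual_norm_le (R : realType) (n : nat) (N : 'rV[R]_n -> R) (v : 'rV[R]_n) (c : R) :
  is_norm N -> (forall u, N u <= 1 -> dotv v u <= c) -> dual_norm N v <= c.
Proof.
move=> normN vc; apply: ge_sup => [|_ [u Nu <-]]; last exact: vc.
by exists 0, 0; rewrite ?dotv0 //= is_norm0.
Qed.

Lemma subgradient_le_ball_sup (R : realType) (n : nat) (N : 'rV[R]_n -> R)
    (f : 'rV[R]_n -> R) (g x : 'rV[R]_n) (eps : R) :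
  is_norm N -> 0 <= eps ->
  (forall x', dotv g (x' - x) <= f x' - f x) ->
  ((f x + eps * dual_norm N g)%:E <=
    ereal_sup [set (f x')%:E | x' in [set x' | (N (x - x') <= eps)%R]])%E.
Proof.
move=> normN eps0 subg.
have ballS x' : N (x - x') <= eps ->
    ((f x')%:E <= ereal_sup [set (f x')%:E | x' in [set x' | (N (x - x') <= eps)%R]])%E.
  by move=> xx'; apply: ereal_sup_ubound; exists x'.
have := ballS x; rewrite subrr is_norm0 // => /(_ eps0) fxS.
case: ereal_sup ballS fxS => [r| |] ballS // fxr; last by rewrite leey.
rewrite lee_fin in fxr; rewrite lee_fin.
have [->|eps_neq0] := eqVneq eps 0; first by rewrite mul0r addr0.
have eps_gt0 : 0 < eps by rewrite lt_neqAle eq_sym eps_neq0.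
rewrite -lerBrDl -ler_pdivlMl //; apply: dual_norm_le => // u Nu1.
have xu_in_ball : N (x - (x + eps *: u)) <= eps.
  case: normN => _ _ NZ _.
  by rewrite opprD addNKr -scaleNr NZ normrN ger0_norm // ler_piMr.
have := ballS _ xu_in_ball; rewrite lee_fin.
have := subg (x + eps *: u); rewrite addrAC subrr add0r dotvZ.
by rewrite ler_pdivlMl // => sub_xu xu_r; lra.
Qed.

Lemma ge0_le_integral_nonmeasurable {d : measure_display} {T : measurableType d}
    {R : realType} (mu : {measure set T -> \bar R}) (D : set T) (f1 f2 : T -> \bar R) :
  (forall x, D x -> (0 <= f1 x)%E) -> (forall x, D x -> (f1 x <= f2 x)%E) ->
  (\int[mu]_(x in D) f1 x <= \int[mu]_(x in D) f2 x)%E.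
Proof.
move=> f1_ge0 f12; rewrite !(integral_mkcond D).
have f2_ge0 x : D x -> (0 <= f2 x)%E.
  by move=> Dx; apply: le_trans (f12 _ Dx); exact: f1_ge0.
rewrite !ge0_integralTE; [|exact: erestrict_ge0..].
apply: ereal_sup_le => _ [h hf1 <-]; exists h => // x.
exact: le_trans (hf1 x) (lee_restrict f12 x).
Qed.

Lemma ge0_integralD_scaled_le {d : measure_display} {T : measurableType d}
    {R : realType} (mu : {measure set T -> \bar R}) (f g h : T -> \bar R) (c : R) :
  0 <= c -> (forall t, (0 <= f t)%E) -> (forall t, (0 <= g t)%E) ->
  measurable_fun setT f -> measurable_fun setT g ->
  (forall t, (f t + c%:E * g t <= h t)%E) ->
  (\int[mu]_t f t + c%:E * \int[mu]_t g t <= \int[mu]_t h t)%E.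
Proof.
move=> c_ge0 f_ge0 g_ge0 mf mg fgh.
have cg_ge0 t : (0 <= c%:E * g t)%E by rewrite mule_ge0.
rewrite -ge0_integralZl_EFin // -ge0_integralD //; last exact: emeasurable_funM.
by apply: ge0_le_integral_nonmeasurable => t _; rewrite ?adde_ge0.
Qed.

Theorem corollary3 (R : realType) (n p : nat) (d : measure_display)
  (Z : measurableType d) (Y : Type) (P : probability Z R)
  (px : Z -> 'rV[R]_n) (py : Z -> Y)
  (N : 'rV[R]_n -> R) (loss : 'rV[R]_n -> Y -> 'rV[R]_p -> R)
  (W : set 'rV[R]_p) (eps : R) :
  bijective (fun z => (px z, py z)) ->
  compact W ->
  is_norm N ->
  (0 <= eps) ->
  (forall x y w, W w -> 0 <= loss x y w) ->
  (forall x y w, W w -> differentiable (fun x' => loss x' y w) x) ->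
  (forall x x' y w, W w ->
     loss x' y w - loss x y w >= dotv (grad (fun x0 => loss x0 y w) x) (x' - x)) ->
  (forall w, W w -> measurable_fun [set: Z] (fun z => (loss (px z) (py z) w)%:E)) ->
  (forall w, W w -> measurable_fun [set: Z]
     (fun z => (dual_norm N (grad (fun x => loss x (py z) w) (px z)))%:E)) ->
  (adv_risk P px py N loss W eps >=
   std_risk P px py loss W + eps%:E * grad_term P px py N loss W)%E.
Proof.
move=> _ _ normN eps_ge0 loss_ge0 _ subgrad mloss mgrad.
apply: le_ereal_inf_tmp => _ [w Ww <-].
apply: (le_trans _ (ge0_integralD_scaled_le P _ _ _ _ eps_ge0 _ _ (mloss w Ww)
  (mgrad w Ww) _)) => [| z | z | z]; rewrite ?lee_fin ?dual_norm_ge0 //.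
- apply: leeD; first by apply: ereal_inf_lbound; exists w.
  by apply: lee_wpmul2l; [rewrite lee_fin | apply: ereal_inf_lbound; exists w].
- exact: loss_ge0.
- rewrite -EFinM -EFinD.
  by apply: subgradient_le_ball_sup => // x'; exact: subgrad.
Qed.
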